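(* Let $u$ and $v$ be vertices of $T$ such that $v$ is not a vertex of $T^u$. Let $X$ be the set of vertices in $C_{T^u}$ that are ancestors of $v$. Suppose $X\neq\emptyset$ and let $x$ be the last vertex on the path in $T$ from $u$ to $v$ that is contained in $T^u$. Then $x\in X$, and $x$ is the deepest vertex of $X$.
   Context: Let $T$ be a rooted tree on $n$ vertices with positive edge weights. Ancestor/descendant refer to $T$, and a vertex counts as its own ancestor and descendant. $T_v$ denotes the subtree of $T$ rooted at $v$. For every non-leaf vertex $v$ of $T$ fix a child $c_1(v)$ with $|T_{c_1(v)}|$ maximal among the children of $v$; the edges $(v,c_1(v))$ are called leftmost. A subtree $R$ of $T$ (connected subgraph) is rooted at its vertex closest to the root of $T$, denoted $rt(R)$, and inherits the leftmost labelling; $R_v$ is the subtree of $R$ rooted at $v$. For $v\in V(R)$, $P_R(v)$ is the longest downward path from $v$ in $R$ using only leftmost edges; its last vertex is $l(v)$, and $l(R):=l(rt(R))$. For an integer $d$, a vertex $v$ of $R$ is $d$-balanced (in $R$) if $|R_{c_1(v)}|\le |R|-d$ (where $|R_{c_1(v)}|=0$ if $c_1(v)$ is undefined or not in $R$). $b_d(v)$ is the first $d$-balanced vertex on $P_R(v)$, or NULL if none. Define $CV(R,d)=\emptyset$ if $b_d(rt(R))$ is NULL, and otherwise, with $b=b_d(rt(R))$, $CV(R,d)=\{b\}\cup\bigcup_{w}CV(R_w,d)$, the union over the children $w$ of $b$ in $R$. Fix an integer $k\ge 4$. For a subtree $R$ with $m$ vertices, $C_R:=V(R)$ if $k\ge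 m/2-1$, and otherwise $C_R:=CV(R,m/k)\cup\{l(R),rt(R)\}$. Canonical subtrees: $T$ is canonical; if $R$ is canonical, every connected component of the forest obtained from $R$ by deleting the vertices of $C_R$ (and incident edges) is canonical. Every vertex $v$ of $T$ belongs to $C_R$ for exactly one canonical subtree $R$, denoted $T^v$. *)

From HB Require Import structures.
From mathcomp Require Import all_boot all_order all_algebra.
Set Implicit Arguments. Unset Strict Implicit. Unset Printing Implicit Defensive.
Import Order.TTheory GRing.Theory Num.Theory.

(* A rooted tree on the finite vertex type T is given by a parent map [par]
   and a root [root] (par root = root).  Edge weights play no role in the
   statement and are omitted.  [c1 v] is the fixed leftmost child of v. *)

Section TreeDefs.
Variable T : finType.
Variable par : T -> T.
Variable root : T.
Variable c1 : T -> T.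

Definition anc (a v : T) : bool := connect (frel par) v a.

Definition is_tree : Prop := par root = root /\ forall v, anc root v.

Definition is_child (w v : T) : bool := (par w == v) && (w != v).
Definition has_child (v : T) : bool := [exists w, is_child w v].

Definition Tsub (v : T) : {set T} := [set w | anc v w].

Definition leftmost_ok : Prop :=
  forall v, has_child v ->
    is_child (c1 v) v /\ forall w, is_child w v -> #|Tsub w| <= #|Tsub (c1 v)|.

Definition connected_sub (R : {set T}) : Prop :=
  exists2 r, r \in R & forall w, w \in R ->
    anc r w /\ forall a, anc a w -> anc r a -> a \in R.

Definition rt (R : {set T}) : T :=
  odflt root [pick r in R | [forall w in R, anc r w]].

Definition Rsub (R : {set T}) (v : T) : {set T} := [set w in R | anc v w].

Definition c1size (R : {set T}) (v : T) : nat :=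
  if has_child v && (c1 v \in R) then #|Rsub R (c1 v)| else 0.

Definition lstep (R : {set T}) (w : T) : T :=
  if has_child w && (c1 w \in R) then c1 w else w.

Definition Ppath (R : {set T}) (v : T) : seq T :=
  undup (traject (lstep R) v #|T|.+1).

Definition lv (R : {set T}) (v : T) : T := last v (Ppath R v).
Definition lR (R : {set T}) : T := lv R (rt R).

Definition balanced (d : rat) (R : {set T}) (v : T) : bool :=
  ((c1size R v)%:R <= (#|R|)%:R - d)%R.

Definition bd (d : rat) (R : {set T}) (v : T) : option T :=
  ohead [seq w <- Ppath R v | balanced d R w].

Definition children_in (R : {set T}) (b : T) : {set T} :=
  [set w in R | is_child w b].

Fixpoint CVf (d : rat) (n : nat) (R : {set T}) : {set T} :=
  match n with
  | 0 => set0
  | n'.+1 =>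
      match bd d R (rt R) with
      | None => set0
      | Some b => b |: \bigcup_(w in children_in R b) CVf d n' (Rsub R w)
      end
  end.

(* CV(R,d); the fuel #|T|.+1 exceeds the recursion depth *)
Definition CV (R : {set T}) (d : rat) : {set T} := CVf d #|T|.+1 R.

Definition CR (k : nat) (R : {set T}) : {set T} :=
  let m := #|R| in
  if ((m%:R / 2%:R - 1 : rat) <= k%:R)%R then R
  else CV R (m%:R / k%:R) :|: [set lR R; rt R].

Definition is_component (F S : {set T}) : Prop :=
  [/\ connected_sub S, S \subset F &
      forall S', connected_sub S' -> S \subset S' -> S' \subset F -> S' = S].

Inductive canonical (k : nat) : {set T} -> Prop :=
| canonical_T : canonical k [set: T]
| canonical_comp R S : canonical k R -> is_component (R :\: CR k R) S ->
    canonical k S.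

Definition anc_seq (v : T) : seq T := undup (traject par v #|T|).
Definition depth (v : T) : nat := (size (anc_seq v)).-1.

Definition lca (u v : T) : T :=
  nth root (anc_seq u) (find (fun w => w \in anc_seq v) (anc_seq u)).

Definition tpath (u v : T) : seq T :=
  let a := lca u v in
  take (index a (anc_seq u)).+1 (anc_seq u)
  ++ rev (take (index a (anc_seq v)) (anc_seq v)).

End TreeDefs.

From HB Require Import structures.
From mathcomp Require Import all_boot all_order all_algebra.
Set Implicit Arguments. Unset Strict Implicit. Unset Printing Implicit Defensive.

(* Let b be the deepest ancestor of v in R = T^u. As R is connected and contains u,
   the last vertex of R on the u-v path is b, and every vertex of X, being an
   ancestor of v in R, is an ancestor of b. The child of b towards v lies outside R,
   so it remains to show that a vertex s of a canonical subtree S having a child c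
   outside S belongs to C_S. By induction on canonicity, let S be a component of
   R \ C_R. By maximality of S, c lies in C_R. Every vertex of C_R other than rt(R)
   is reached by a leftmost path starting at rt(R) or at a child of a vertex of C_R,
   and the one reaching c passes through s. Hence c = c1(s), the leftmost path of S
   runs from rt(S) down to s and stops there, and s = l(S) lies in C_S. *)

Lemma last_rev (U : Type) (x : U) (s : seq U) : last x (rev s) = head x s.
Proof. by case: s => // y s; rewrite rev_cons last_rcons. Qed.

Lemma head_filter_take (U : Type) (p : pred U) (s : seq U) n x0 :
  find p s < n -> head x0 (filter p (take n s)) = nth x0 s (find p s).
Proof.
by elim: s n => [|y s IHs] [|n] //=; case: (p y) => //= /IHs.
Qed.

Lemma filter_take_before_find (U : Type) (p : pred U) (s : seq U) n :
  n <= find p s -> filter p (take n s) = [::].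
Proof.
by elim: s n => [|y s IHs] [|n] //=; case: (p y) => //= /IHs.
Qed.

Lemma last_undup_traject (U : eqType) (f : U -> U) x s j n :
  j < n -> iter j f x = s -> f s = s -> last x (undup (traject f x n)) = s.
Proof.
move=> lt_jn itj fs; rewrite -(subnKC (ltnW lt_jn)) trajectD itj undup_cat last_cat.
have -> : traject f s (n - j) = nseq (n - j) s.
  by elim: (n - j) => //= m IHm; rewrite fs IHm.
suff -> : undup (nseq (n - j) s) = [:: s] by [].
by rewrite -(subnSK lt_jn); elim: (n - j.+1) => [|m IHm] //=; rewrite mem_head.
Qed.

Lemma ohead_mem (U : eqType) (s : seq U) x : ohead s = Some x -> x \in s.
Proof. by case: s => //= y s [->]; rewrite mem_head. Qed.

Section Ancestors.
Variables (T : finType) (par : T -> T).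
Local Notation anc := (anc par).
Local Notation is_child := (is_child par).
Local Notation anc_seq := (anc_seq par).

Lemma ancP a w : reflect (exists n, iter n par w = a) (anc a w).
Proof.
apply: (iffP idP) => [aw | [n <-]]; last exact: fconnect_iter.
by exists (findex par w a); exact: iter_findex.
Qed.

Lemma anc_refl a : anc a a.
Proof. exact: connect0. Qed.

Lemma anc_trans a b c : anc a b -> anc b c -> anc a c.
Proof. by move=> ab bc; apply: connect_trans bc ab. Qed.

Lemma anc_par w : anc (par w) w.
Proof. by apply/ancP; exists 1. Qed.

Lemma proper_anc_par a c : anc a c -> a != c -> anc a (par c).
Proof.
move=> /ancP[[|n] itn] ac; first by rewrite -itn eqxx in ac.
by apply/ancP; exists n; rewrite -iterSr.
Qed.

Lemma anc_total a b w : anc a w -> anc b w -> anc a b || anc b a.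
Proof.
move=> /ancP[i <-] /ancP[j <-]; case: (leqP i j) => [le_ij | /ltnW le_ji].
  by apply/orP; right; apply/ancP; exists (j - i); rewrite -iterD subnK.
by apply/orP; left; apply/ancP; exists (i - j); rewrite -iterD subnK.
Qed.

Lemma child_on_path a w : anc a w -> a != w -> exists2 c, is_child c a & anc c w.
Proof.
move=> /ancP ex_n aw.
have /ex_minnP[n /eqP itn min_n] : exists n, iter n par w == a.
  by case: ex_n => n <-; exists n.
case: n itn min_n => [|n] itn min_n; first by rewrite -itn eqxx in aw.
exists (iter n par w); last exact: fconnect_iter.
rewrite /is_child -{1}itn eqxx /=; apply/eqP => itn'.
by have := min_n n; rewrite itn' eqxx ltnn => /(_ isT).
Qed.

Lemma is_child_has_child c s : is_child c s -> has_child par s.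
Proof. by move=> cs; apply/existsP; exists c. Qed.

Lemma anc_seq_mem y v : (y \in anc_seq v) = anc y v.
Proof.
rewrite /anc_seq mem_undup; apply/trajectP/idP => [[i _ ->] | yv].
  exact: fconnect_iter.
exists (findex par v y); last by rewrite iter_findex.
exact: leq_trans (findex_max yv) (max_card _).
Qed.

Lemma anc_seq_sorted v : sorted (fun a b => anc b a) (anc_seq v).
Proof.
have desc_trans : transitive (fun a b => anc b a).
  by move=> b a c ab bc; apply: anc_trans bc ab.
rewrite /anc_seq; apply: (subseq_sorted desc_trans (undup_subseq _)).
case: #|T| => //= n; apply: sub_path (fpath_traject par v n).
by move=> a b /eqP <-; exact: anc_par.
Qed.

Lemma depth_le y x : anc y x -> depth par y <= depth par x.
Proof.
move=> yx; rewrite /depth -!subn1 leq_sub2r // uniq_leq_size ?undup_uniq //.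
by move=> z; rewrite !anc_seq_mem => zy; apply: anc_trans zy yx.
Qed.

Variable root : T.
Hypothesis tree : is_tree par root.

Lemma anc_root w : anc root w.
Proof. by case: tree. Qed.

Lemma iter_par_root n : iter n par root = root.
Proof. by elim: n => //= n ->; case: tree. Qed.

Lemma anc_antisym a b : anc a b -> anc b a -> a = b.
Proof.
(* b would lie on a cycle of par, yet its iterates reach the fixed point root *)
move=> /ancP[n itn] /ancP[m itm]; apply/eqP; apply: contraT => ab.
have loop_b j : iter (j * (n + m)) par b = b.
  by elim: j => // j IHj; rewrite mulSn iterD IHj addnC iterD itn itm.
have nm_gt0 : 0 < n + m.
  by case: n itn {loop_b} => [/= ba|//]; rewrite ba eqxx in ab.
have /ancP[j itj] := anc_root b.
have b_root : b = root.
  by rewrite -(loop_b j) -(subnK (leq_pmulr j nm_gt0)) iterD itj iter_par_root.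
by rewrite -itn b_root iter_par_root eqxx in ab.
Qed.

Lemma child_not_anc c s : is_child c s -> ~~ anc c s.
Proof.
case/andP=> /eqP<- cpc; apply/negP => /anc_antisym/(_ (anc_par c)) pc_c.
by rewrite -pc_c eqxx in cpc.
Qed.

Lemma is_child_anc_eq x c s : is_child x s -> is_child c s -> anc x c -> x = c.
Proof.
move=> xs /[dup] cs /andP[/eqP pc _] xc; apply/eqP; apply: contraLR (child_not_anc xs).
by rewrite negbK -pc; apply: proper_anc_par.
Qed.

Lemma anc_index v y z : anc y v -> anc z v ->
  anc y z = (index z (anc_seq v) <= index y (anc_seq v)).
Proof.
move=> yv zv; set M := anc_seq v.
have yM : y \in M by rewrite anc_seq_mem.
have zM : z \in M by rewrite anc_seq_mem.
have sortM := anc_seq_sorted v.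
have desc_trans : transitive (fun a b => anc b a).
  by move=> b a c ab bc; apply: anc_trans bc ab.
have idx_in w : w \in M -> index w M \in [pred n | n < size M].
  by rewrite inE index_mem.
apply/idP/idP => [yz | le_zy].
  rewrite leqNgt; apply/negP => lt_yz.
  have := sorted_ltn_nth desc_trans y sortM _ _ (idx_in y yM) (idx_in z zM) lt_yz.
  rewrite !nth_index // => /(anc_antisym yz) yz_eq.
  by rewrite yz_eq ltnn in lt_yz.
have := sorted_leq_nth desc_trans anc_refl y sortM _ _ (idx_in z zM) (idx_in y yM) le_zy.
by rewrite !nth_index.
Qed.

Definition n_anc y := #|[set z | anc z y]|.

Lemma n_anc_lt a b : anc a b -> a != b -> n_anc a < n_anc b.
Proof.
move=> ab ne_ab; apply: proper_card; apply/properP; split.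
  by apply/subsetP => z; rewrite !inE => za; apply: anc_trans za ab.
exists b; rewrite !inE ?anc_refl //.
by apply: contra ne_ab => ba; rewrite (anc_antisym ab ba).
Qed.

Local Notation rt := (rt par root).

Lemma rt_eq (R : {set T}) w : w \in R -> (forall x, x \in R -> anc w x) -> rt R = w.
Proof.
move=> wR w_anc; rewrite /rt; case: pickP => [r /andP[rR /forallP r_anc] | no_rt] /=.
  by apply: anc_antisym (w_anc r rR); have := r_anc w; rewrite wR.
have := no_rt w; rewrite wR /=; move/negbT/negP; case.
by apply/forallP => x; apply/implyP; apply: w_anc.
Qed.

Section Connected.
Variable R : {set T}.
Hypothesis connR : connected_sub par R.

Lemma connected_rt_in : rt R \in R.
Proof. by case: connR => r rR r_anc; rewrite (rt_eq rR) // => x /r_anc[]. Qed.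

Lemma connected_rt_anc w : w \in R -> anc (rt R) w.
Proof. by case: connR => r rR r_anc; rewrite (rt_eq rR) => [/r_anc[]|x /r_anc[]]. Qed.

Lemma connected_between w a : w \in R -> anc a w -> anc (rt R) a -> a \in R.
Proof.
case: connR => r rR r_anc wR; rewrite (rt_eq rR) => [|x /r_anc[] //].
exact: (r_anc w wR).2.
Qed.

End Connected.

Lemma Rsub_rt (R : {set T}) w : w \in R -> rt (Rsub par R w) = w.
Proof.
by move=> wR; apply: rt_eq => [|x]; rewrite inE ?wR ?anc_refl // => /andP[].
Qed.

Lemma component_child_notin (F S : {set T}) s c :
  is_component par F S -> s \in S -> is_child c s -> c \notin S -> c \notin F.
Proof.
case=> connS SF maxS sS cs cS; apply/negP => cF.
have [/eqP pc _] := andP cs.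
suff: c |: S = S by move/setP/(_ c); rewrite setU11 (negbTE cS).
apply: maxS; [|exact: subsetUr|by rewrite subUset sub1set cF SF].
exists (rt S); first by rewrite setU1r // connected_rt_in.
move=> w; rewrite in_setU1 => /predU1P[-> | wS].
  split; first by apply: anc_trans (connected_rt_anc connS sS) _; rewrite -pc anc_par.
  move=> a ac rt_a; case: (eqVneq a c) => [-> | ne_ac]; first exact: setU11.
  by rewrite setU1r // (connected_between connS sS) // -pc proper_anc_par.
split=> [|a aw rt_a]; first exact: connected_rt_anc.
by rewrite setU1r // (connected_between connS wS).
Qed.

Lemma lca_anc u v : anc (lca par root u v) u /\ anc (lca par root u v) v.
Proof.
have common : has (fun w => w \in anc_seq v) (anc_seq u).
  by apply/hasP; exists root; rewrite anc_seq_mem anc_root.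
by rewrite -!anc_seq_mem; split; [rewrite mem_nth // -has_find | exact: nth_find].
Qed.

Section DeepestAncestor.
Variables (R : {set T}) (v : T).
Hypothesis R_anc_v : has (fun w => w \in R) (anc_seq v).

Definition deepest_anc := nth root (anc_seq v) (find (fun w => w \in R) (anc_seq v)).

Lemma deepest_anc_in : deepest_anc \in R.
Proof. exact: nth_find. Qed.

Lemma deepest_anc_anc : anc deepest_anc v.
Proof. by rewrite -anc_seq_mem mem_nth // -has_find. Qed.

Lemma index_deepest_anc :
  index deepest_anc (anc_seq v) = find (fun w => w \in R) (anc_seq v).
Proof. by rewrite index_uniq ?undup_uniq // -has_find. Qed.

Lemma anc_deepest_anc y : y \in R -> anc y v -> anc y deepest_anc.
Proof.
move=> yR yv; rewrite (anc_index yv deepest_anc_anc) index_deepest_anc leqNgt.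
by apply/negP => /(before_find root); rewrite nth_index ?yR // anc_seq_mem.
Qed.

Lemma last_tpath_in u : connected_sub par R -> u \in R ->
  last u [seq w <- tpath par root u v | w \in R] = deepest_anc.
Proof.
move=> connR uR; have [au av] := lca_anc u v.
rewrite /tpath; set a := lca par root u v in au av *.
have aL : a \in anc_seq u by rewrite anc_seq_mem.
rewrite (take_nth root) ?index_mem // nth_index // filter_cat filter_rev last_cat last_rev.
case: (ltnP (find (fun w => w \in R) (anc_seq v)) (index a (anc_seq v))) => [lt_ba | le_ab].
  by rewrite head_filter_take // (set_nth_default root) // -has_find.
rewrite filter_take_before_find //= filter_rcons.
have ba : anc deepest_anc a by rewrite (anc_index deepest_anc_anc av) index_deepest_anc.
have aR : a \in R.
  apply: (connected_between connR uR au).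
  exact: anc_trans (connected_rt_anc connR deepest_anc_in) ba.
by rewrite aR last_rcons; apply: anc_antisym (anc_deepest_anc aR av) ba.
Qed.

End DeepestAncestor.

End Ancestors.

Section Leftmost.
Variables (T : finType) (par : T -> T) (root : T) (c1 : T -> T).
Hypotheses (tree : is_tree par root) (leftmost : leftmost_ok par c1).

Local Notation anc := (anc par).
Local Notation is_child := (is_child par).
Local Notation rt := (rt par root).
Local Notation lstep := (lstep par c1).
Local Notation Ppath := (Ppath par c1).
Local Notation lv := (lv par c1).
Local Notation lR := (lR par root c1).
Local Notation CVf := (CVf par root c1).
Local Notation CV := (CV par root c1).
Local Notation CR := (CR par root c1).

Lemma c1_child s : has_child par s -> is_child (c1 s) s.
Proof. by case/leftmost. Qed.

Lemma lstep_cases (R : {set T}) w :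
  lstep R w = w \/ [/\ lstep R w = c1 w, c1 w \in R & is_child (c1 w) w].
Proof.
rewrite /lstep; case: ifP => [/andP[hw c1R] | _]; last by left.
by right; split=> //; apply: c1_child.
Qed.

Definition leftmost_chain t c :=
  forall a, anc t a -> anc a c -> a != c -> anc (c1 a) c.

Lemma Ppath_chain (R : {set T}) x c : c \in Ppath R x -> anc x c /\ leftmost_chain x c.
Proof.
rewrite /Ppath mem_undup => /trajectP[i _ ->].
elim: i => [|i [x_y chain_y]] /=.
  split=> [|a xa ax]; first exact: anc_refl.
  by rewrite (anc_antisym tree ax xa) eqxx.
set y := iter i _ x in x_y chain_y *.
case: (lstep_cases R y) => [-> | [-> _ /andP[/eqP py _]]]; first by split.
have y_c1 : anc y (c1 y) by rewrite -{1}py anc_par.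
split=> [|a xa a_c1 ne_a]; first exact: anc_trans x_y y_c1.
have ay : anc a y by rewrite -py; apply: proper_anc_par.
case: (eqVneq a y) => [-> | ne_ay]; first exact: anc_refl.
exact: anc_trans (chain_y a xa ay ne_ay) y_c1.
Qed.

Lemma Ppath_sub (R : {set T}) x c : x \in R -> c \in Ppath R x -> c \in R.
Proof.
move=> xR; rewrite /Ppath mem_undup => /trajectP[i _ ->].
by elim: i => //= i; case: (lstep_cases R (iter i (lstep R) x)) => [-> | [-> ? _]].
Qed.

Lemma lv_in (R : {set T}) x : x \in R -> lv R x \in R.
Proof.
move=> xR; rewrite /lv; have := mem_last x (Ppath R x).
by rewrite inE => /predU1P[-> // | ]; apply: Ppath_sub.
Qed.

Lemma CVf_sub d n (R : {set T}) : rt R \in R -> CVf d n R \subset R.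
Proof.
elim: n R => [|n IHn] R rtR /=; first exact: sub0set.
case bd_rt: bd => [b|]; last exact: sub0set.
rewrite subUset sub1set; apply/andP; split.
  by have := ohead_mem bd_rt; rewrite mem_filter => /andP[_]; apply: Ppath_sub.
apply/bigcupsP => w; rewrite inE => /andP[wR _].
apply: subset_trans (IHn _ _) _; first by rewrite Rsub_rt // inE wR anc_refl.
by apply/subsetP => x; rewrite inE => /andP[].
Qed.

Lemma CR_sub k (R : {set T}) : connected_sub par R -> CR k R \subset R.
Proof.
move=> /(connected_rt_in tree) rtR; rewrite /CR; case: ifP => _ //.
rewrite !subUset !sub1set CVf_sub // rtR /= andbT; exact: lv_in rtR.
Qed.

Lemma lR_in_CR k (R : {set T}) : rt R \in R -> lR R \in CR k R.
Proof.
by move=> rtR; rewrite /CR; case: ifP => _; [exact: lv_in rtR | rewrite !inE eqxx orbT].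
Qed.

Definition leftmost_reached (R C : {set T}) c :=
  exists t, [/\ anc t c, leftmost_chain t c & t = rt R \/ par t \in C].

Lemma leftmost_reached_sub (R C C' : {set T}) c :
  C \subset C' -> leftmost_reached R C c -> leftmost_reached R C' c.
Proof.
move=> CC' [t [tc chain [trt | ptC]]]; exists t; split=> //; first by left.
by right; apply: subsetP ptC.
Qed.

Lemma CVf_leftmost_reached d n (R : {set T}) c :
  c \in CVf d n R -> leftmost_reached R (CVf d n R) c.
Proof.
elim: n R c => [|n IHn] R c /=; first by rewrite inE.
case bd_rt: bd => [b|]; last by rewrite inE.
rewrite in_setU1 => /predU1P[-> | /bigcupP[w]].
  have := ohead_mem bd_rt; rewrite mem_filter => /andP[_ /Ppath_chain[rt_b chain]].
  by exists (rt R); split=> //; left.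
rewrite inE => /andP[wR wb] /IHn[t [tc chain rt_or_C]].
exists t; split=> //; right; case: rt_or_C => [-> | ptC].
  by rewrite Rsub_rt //; have [/eqP-> _] := andP wb; apply: setU11.
by rewrite setU1r //; apply/bigcupP; exists w; rewrite // inE wR.
Qed.

Lemma lR_leftmost_reached (R C : {set T}) :
  lR R != rt R -> leftmost_reached R C (lR R).
Proof.
rewrite /lR /lv; have := mem_last (rt R) (Ppath R (rt R)).
rewrite inE => /predU1P[-> | /Ppath_chain[rt_l chain] _]; first by rewrite eqxx.
by exists (rt R); split=> //; left.
Qed.

Lemma separator_leftmost_reached (R : {set T}) d c :
  c \in CV R d :|: [set lR R; rt R] -> c != rt R ->
  leftmost_reached R (CV R d :|: [set lR R; rt R]) c.
Proof.
rewrite in_setU in_set2 => /orP[cCV | /orP[/eqP-> | /eqP->]] c_rt.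
- exact: leftmost_reached_sub (subsetUl _ _) (CVf_leftmost_reached cCV).
- exact: lR_leftmost_reached.
- by rewrite eqxx in c_rt.
Qed.

Lemma leftmost_chain_par t c s :
  leftmost_chain t c -> is_child c s -> anc t s -> leftmost_chain t s /\ c1 s = c.
Proof.
move=> chain cs ts; have [/eqP pc ne_cs] := andP cs.
have sc : anc s c by rewrite -pc anc_par.
have ne_sc : s != c by rewrite eq_sym.
split=> [a ta a_s ne_as | ]; last first.
  by apply: (is_child_anc_eq tree (c1_child (is_child_has_child cs)) cs); apply: chain.
have [c' c'a _] := child_on_path a_s ne_as.
have [/eqP pc1 _] := andP (c1_child (is_child_has_child c'a)).
have ne_ac : a != c by apply: contraTneq a_s => ->; exact: (child_not_anc tree cs).
rewrite -pc; apply: proper_anc_par (chain a ta (anc_trans a_s sc) ne_ac) _.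
by apply: contraNneq ne_as => c1a_c; rewrite -pc1 c1a_c pc.
Qed.

Lemma lv_leftmost_chain (S : {set T}) x s :
  anc x s -> leftmost_chain x s -> (forall a, anc x a -> anc a s -> a \in S) ->
  lstep S s = s -> lv S x = s.
Proof.
move=> xs chain in_S fix_s; set f := lstep S.
have step y : anc x y -> anc y s -> y != s ->
    [/\ f y = c1 y, is_child (c1 y) y, anc x (c1 y) & anc (c1 y) s].
  move=> xy ys ne_ys; have [c cy _] := child_on_path ys ne_ys.
  have hy := is_child_has_child cy; have c1y := c1_child hy; have [/eqP pc1 _] := andP c1y.
  have x_c1 : anc x (c1 y) by apply: anc_trans xy _; rewrite -{1}pc1 anc_par.
  have c1_s : anc (c1 y) s := chain y xy ys ne_ys.
  by rewrite /f /lstep hy (in_S _ x_c1 c1_s).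
have walk i : anc x (iter i f x) /\ anc (iter i f x) s.
  elim: i => [|i [xy ys]] /=; first by split; [apply: anc_refl |].
  case: (eqVneq (iter i f x) s) => [-> | ne_ys].
    by rewrite /f fix_s; split; last apply: anc_refl.
  by have [-> _ ? ?] := step _ xy ys ne_ys.
have descend i : (forall j, j < i -> iter j f x != s) -> i < n_anc par (iter i f x).
  elim: i => [|i IHi] ne_s.
    by rewrite card_gt0; apply/set0Pn; exists x; rewrite inE anc_refl.
  have [xy ys] := walk i.
  have [fy /andP[/eqP pc1 ne_c1] _ _] := step _ xy ys (ne_s i (ltnSn i)).
  apply: leq_ltn_trans (IHi (fun j lt_ji => ne_s j (ltnW lt_ji))) _.
  rewrite /= fy; apply: (n_anc_lt tree); first by rewrite -{1}pc1 anc_par.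
  by rewrite eq_sym.
have [j itj] : exists j : 'I_#|T|.+1, iter j f x = s.
  case: (pickP (fun j : 'I_#|T|.+1 => iter j f x == s)) => [j /eqP | none].
    by exists j.
  have := descend #|T| (fun j lt_j => negbT (none (Ordinal (leqW lt_j)))).
  by rewrite ltnNge max_card.
exact: last_undup_traject (ltn_ord j) itj fix_s.
Qed.

Lemma lR_component (R C S : {set T}) s c :
  connected_sub par R -> connected_sub par S -> S \subset R :\: C ->
  s \in S -> is_child c s -> c \notin S -> leftmost_reached R C c -> lR S = s.
Proof.
move=> connR connS SRC sS cs cS [t [tc chain rt_or_C]].
have /setDP[sR sC] := subsetP SRC s sS.
have [/eqP pc _] := andP cs.
have ne_tc : t != c.
  apply/eqP => tc_eq; case: rt_or_C => [trt | ptC].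
    by have := child_not_anc tree cs; rewrite -tc_eq trt (connected_rt_anc tree connR sR).
  by move: ptC; rewrite tc_eq pc (negbTE sC).
have ts : anc t s by rewrite -pc; apply: proper_anc_par.
have [chain_s c1s] := leftmost_chain_par chain cs ts.
have t_rtS : anc t (rt S).
  have rtS := connected_rt_in tree connS.
  case: rt_or_C => [-> | ptC].
    by apply: (connected_rt_anc tree connR); have /setDP[] := subsetP SRC _ rtS.
  case/orP: (anc_total ts (connected_rt_anc tree connS sS)) => // rtS_t.
  case: (eqVneq (rt S) t) => [-> | ne_rt_t]; first exact: anc_refl.
  have ptS : par t \in S.
    apply: (connected_between tree connS sS (anc_trans (anc_par par t) ts)).
    exact: proper_anc_par rtS_t ne_rt_t.
  by have /setDP[_] := subsetP SRC _ ptS; rewrite ptC.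
apply: lv_leftmost_chain.
- exact: (connected_rt_anc tree connS sS).
- by move=> a rt_a; apply: chain_s; apply: anc_trans rt_a.
- by move=> a rt_a a_s; apply: (connected_between tree connS sS).
- by rewrite /lstep c1s (negbTE cS) andbF.
Qed.

Lemma canonical_connected k (R : {set T}) :
  canonical par root c1 k R -> connected_sub par R.
Proof.
case=> [|R' S _ [] //]; exists root => [|w _]; rewrite ?inE //.
by split=> [|a _ _]; rewrite ?inE ?(anc_root tree).
Qed.

Lemma boundary_in_CR k (R : {set T}) s c :
  canonical par root c1 k R -> s \in R -> is_child c s -> c \notin R -> s \in CR k R.
Proof.
move=> canR; elim: canR s c => [|{}R S canR IHR compS] s c sS cs cS.
  by rewrite inE in cS.
have [connS SRK _] := compS.
have /setDP[sR sK] := subsetP SRK s sS.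
have connR := canonical_connected canR.
have cR : c \in R by apply: contraNT sK => /(IHR s c sR cs).
have cK : c \in CR k R.
  by have := component_child_notin tree compS sS cs cS; rewrite in_setD cR andbT negbK.
have ne_c_rt : c != rt R.
  apply: contraTneq (connected_rt_anc tree connR sR) => <-; exact: (child_not_anc tree cs).
have reached : leftmost_reached R (CR k R) c.
  move: sK cK; rewrite /CR; case: ifP => _; first by rewrite sR.
  by move=> _ cK; apply: separator_leftmost_reached.
rewrite -(lR_component connR connS SRK sS cs cS reached).
exact: lR_in_CR (connected_rt_in tree connS).
Qed.

Lemma deepest_anc_in_CR k (R : {set T}) v :
  canonical par root c1 k R -> v \notin R -> has (fun w => w \in R) (anc_seq par v) ->
  deepest_anc par root R v \in CR k R.
Proof.
move=> canR vR R_anc_v; set b := deepest_anc par root R v.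
have bR : b \in R := deepest_anc_in root R_anc_v.
have ne_bv : b != v by apply: contraNneq vR => <-.
have [c cb cv] := child_on_path (deepest_anc_anc root R_anc_v) ne_bv.
apply: (boundary_in_CR canR bR cb); apply: contraT => /negbNE cR.
by have := child_not_anc tree cb; rewrite (anc_deepest_anc tree R_anc_v cR cv).
Qed.

End Leftmost.

Theorem lemma5 (T : finType) (par : T -> T) (root : T) (c1 : T -> T)
    (k : nat) (u v : T) (R : {set T}) :
  is_tree par root -> leftmost_ok par c1 -> 4 <= k ->
  canonical par root c1 k R -> u \in CR par root c1 k R ->
  v \notin R ->
  let X := [set y in CR par root c1 k R | anc par y v] in
  X != set0 ->
  let x := last u [seq w <- tpath par root u v | w \in R] in
  x \in X /\ (forall y, y \in X -> depth par y <= depth par x).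
Proof.
(* nothing below depends on k *)
move=> tree leftmost _ canR uC vR X /set0Pn[y0] + x.
have connR := canonical_connected tree canR.
have CR_R := subsetP (CR_sub tree leftmost k connR).
rewrite inE => /andP[y0C y0v].
have R_anc_v : has (fun w => w \in R) (anc_seq par v).
  by apply/hasP; exists y0; rewrite ?anc_seq_mem // CR_R.
have -> : x = deepest_anc par root R v.
  exact: (last_tpath_in tree R_anc_v connR (CR_R u uC)).
split; first by rewrite inE (deepest_anc_in_CR tree leftmost) // deepest_anc_anc.
move=> y; rewrite inE => /andP[yC yv].
exact/depth_le/(anc_deepest_anc tree R_anc_v (CR_R y yC) yv).
Qed.
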